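(* Let $a,b,q$ be parameters (complex numbers or indeterminates) such that no denominator below vanishes, let $c(n,a,b,q)=\frac{(b;q)_n}{(a;q)_n}$, and for integers $n\ge1$, $m\ge0$ let $$d(n,m,a,b,q)=\det\big(c(i+j+m,a,b,q)\big)_{i,j=0}^{n-1}.$$ Then $$d(n,0,a,b,q)=q^{2\binom{n}{3}}\prod_{k=1}^{n-1}\frac{(b;q)_k\,(q;q)_k\prod_{j=0}^{k-1}(b-q^ja)}{(q^{k-1}a;q)_k\,(a;q)_{2k}}$$ and $$d(n,m,a,b,q)=d(n,0,a,b,q)\,q^{m\binom{n}{2}}\prod_{j=0}^{m-1}\frac{(q^jb;q)_n}{(q^{n-1+j}a;q)_n}.$$
   Context: Notation: $(x;q)_n=\prod_{j=0}^{n-1}(1-q^jx)$, with $(x;q)_0=1$; empty products equal $1$. *)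

(* parameters a b q live in an arbitrary field R
   (covers complex numbers and rational functions in indeterminates). *)
From mathcomp Require Import all_boot all_order all_algebra.
Set Implicit Arguments. Unset Strict Implicit. Unset Printing Implicit Defensive.
Import GRing.Theory.
Local Open Scope ring_scope.

Definition qpoch (R : fieldType) (x q : R) (n : nat) : R :=
  \prod_(j < n) (1 - q ^+ j * x).

Definition cc (R : fieldType) (n : nat) (a b q : R) : R :=
  qpoch b q n / qpoch a q n.

Definition dd (R : fieldType) (n m : nat) (a b q : R) : R :=
  \det (\matrix_(i < n, j < n) cc (i + j + m)%N a b q).

(* Subtracting (1 - q^j b)/(1 - q^j a) times column j from column j+1 of the
   Hankel matrix (c(i+j)) turns its first row into (1, 0, ..., 0), because
   c(k+1) = c(k) (1 - q^k b)/(1 - q^k a).  The remaining entries factor as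
   (q^(i+1) - 1) c'(i+j) s_j for an explicit column factor s_j, where c' is c
   with parameters (q^2 a, q b), so
   d(n+1; a, b) = prod_j (q^(j+1) - 1) s_j * d(n; q^2 a, q b), and the closed
   form follows by induction on n.  For the second formula,
   c(i+j+m; a, b) = c(m; a, b) c(i+j; q^m a, q^m b) makes d(n, m) equal to
   c(m)^n d(n, 0) at the shifted parameters, which leaves an identity between
   explicit products, proved by induction on m. *)

From mathcomp Require Import all_boot all_order all_algebra.
From mathcomp Require Import ring zify.
Import GRing.Theory.
Local Open Scope ring_scope.
Set Implicit Arguments. Unset Strict Implicit. Unset Printing Implicit Defensive.

Section ColumnSweep.
Variable R : comRingType.

Definition col_sweep n (r : nat -> R) : 'M[R]_n :=
  1%:M - \matrix_(k, j) ((k.+1 == j :> nat)%:R * r k).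

Lemma det_col_sweep n r : \det (col_sweep n r) = 1.
Proof.
rewrite -det_tr det_trig; last first.
  apply/is_trig_mxP => i j ltij; rewrite !mxE.
  by rewrite -val_eqE /= (gtn_eqF ltij) (@gtn_eqF i j.+1 (ltnW ltij)) mul0r subr0.
by apply: big1 => i _; rewrite !mxE eqxx eqn_leq ltnn mul0r subr0.
Qed.

Lemma col_sweep_ord0 m n (M : 'M[R]_(m, n.+1)) r i :
  (M *m col_sweep n.+1 r) i ord0 = M i ord0.
Proof.
rewrite mulmxBr mulmx1 !mxE big1 ?subr0 // => k _.
by rewrite !mxE mul0r mulr0.
Qed.

Lemma col_sweep_lift m n (M : 'M[R]_(m, n.+1)) r i (j : 'I_n) :
  (M *m col_sweep n.+1 r) i (lift ord0 j) =
  M i (lift ord0 j) - M i (widen_ord (leqnSn n) j) * r j.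
Proof.
rewrite mulmxBr mulmx1 !mxE (bigD1 (widen_ord (leqnSn n) j)) //= big1.
  by rewrite !mxE /= eqxx mul1r addr0.
move=> k neqkj; rewrite !mxE lift0 eqSS.
by rewrite -val_eqE /= in neqkj; rewrite (negbTE neqkj) mul0r mulr0.
Qed.

Lemma det_row0_pivot n (A : 'M[R]_n.+1) :
  (forall j, A ord0 (lift ord0 j) = 0) ->
  \det A = A ord0 ord0 * \det (row' ord0 (col' ord0 A)).
Proof.
move=> row0; rewrite (expand_det_row _ ord0) big_ord_recl big1 ?addr0.
  by rewrite /cofactor expr0 mul1r.
by move=> j _; rewrite row0 mul0r.
Qed.

End ColumnSweep.

Section QHankel.
Variable R : fieldType.
Implicit Types (x a b q : R) (n m k N : nat).

Lemma qpoch0 x q : qpoch x q 0 = 1.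
Proof. by rewrite /qpoch big_ord0. Qed.

Lemma qpochSr x q k : qpoch x q k.+1 = qpoch x q k * (1 - q ^+ k * x).
Proof. by rewrite /qpoch big_ord_recr. Qed.

Lemma qpochSl x q k : qpoch x q k.+1 = (1 - x) * qpoch (q * x) q k.
Proof.
rewrite /qpoch big_ord_recl expr0 mul1r; congr (_ * _).
by apply: eq_bigr => i _; rewrite exprSr mulrA.
Qed.

Lemma qpochD x q m k : qpoch x q (m + k) = qpoch x q m * qpoch (q ^+ m * x) q k.
Proof.
elim: k => [|k IH]; first by rewrite addn0 qpoch0 mulr1.
by rewrite addnS !qpochSr IH exprD; ring.
Qed.

Lemma qpoch_neq0P x q N :
  reflect (forall j, (j < N)%N -> 1 - q ^+ j * x != 0) (qpoch x q N != 0).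
Proof.
apply: (iffP (prodf_neq0 _ _)) => [H j ltjN | H j _]; last exact: H.
exact: (H (Ordinal ltjN)).
Qed.

Lemma qpoch_shift_neq0 x q N m k :
  qpoch x q N != 0 -> (m + k <= N)%N -> qpoch (q ^+ m * x) q k != 0.
Proof.
move=> /qpoch_neq0P nzN lemkN; apply/qpoch_neq0P => j ltjk.
by rewrite mulrA -exprD; apply: nzN; lia.
Qed.

Lemma qpoch_le_neq0 x q N k : qpoch x q N != 0 -> (k <= N)%N -> qpoch x q k != 0.
Proof. by move=> nzN lekN; rewrite -[x]mul1r -(expr0 q) (qpoch_shift_neq0 nzN). Qed.

Definition qratio a b q k := (1 - q ^+ k * b) / (1 - q ^+ k * a).

Lemma cc0 a b q : cc 0 a b q = 1.
Proof. by rewrite /cc !qpoch0 divr1. Qed.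

Lemma ccSr a b q k : cc k.+1 a b q = cc k a b q * qratio a b q k.
Proof. by rewrite /cc /qratio !qpochSr mulf_div. Qed.

Lemma cc1 a b q : cc 1 a b q = (1 - b) / (1 - a).
Proof. by rewrite /cc /qpoch !big_ord1 expr0 !mul1r. Qed.

Lemma ccD a b q m k : cc (m + k) a b q = cc m a b q * cc k (q ^+ m * a) (q ^+ m * b) q.
Proof. by rewrite /cc !qpochD mulf_div. Qed.

Lemma qratio_sub a b q i j :
  1 - q ^+ (i + j) * a != 0 -> 1 - q ^+ j * a != 0 ->
  qratio a b q (i + j) - qratio a b q j =
  (q ^+ i - 1) * (q ^+ j * (a - b) / (1 - q ^+ j * a)) / (1 - q ^+ (i + j) * a).
Proof. by move=> nzij nzj; rewrite /qratio exprD; field; rewrite -exprD nzij nzj. Qed.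

Lemma ccS_div_factor a b q k :
  cc k.+1 a b q / (1 - q ^+ k.+1 * a) =
  (1 - b) / ((1 - a) * (1 - q * a)) * cc k (q ^+ 2 * a) (q * b) q.
Proof.
rewrite /cc -mulrA -invfM -qpochSr !qpochSl.
by rewrite (mulrA q q a) -expr2 !invfM; ring.
Qed.

Definition row_scale q i := q ^+ i.+1 - 1.

Definition col_scale a b q j :=
  q ^+ j * (a - b) / (1 - q ^+ j * a) * ((1 - b) / ((1 - a) * (1 - q * a))).

Lemma cc_sweep_entry a b q i j : qpoch a q (i + j).+2 != 0 ->
  cc (i + j).+2 a b q - cc (i + j).+1 a b q * qratio a b q j =
  row_scale q i * cc (i + j) (q ^+ 2 * a) (q * b) q * col_scale a b q j.
Proof.
move=> /qpoch_neq0P nz.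
have nzj : 1 - q ^+ j * a != 0 by apply: nz; lia.
have nzij : 1 - q ^+ (i.+1 + j) * a != 0 by apply: nz; lia.
rewrite ccSr -mulrBr -addSn (qratio_sub _ nzij nzj).
transitivity (row_scale q i * (cc (i.+1 + j) a b q / (1 - q ^+ (i.+1 + j) * a)) *
              (q ^+ j * (a - b) / (1 - q ^+ j * a))); first by rewrite /row_scale; ring.
by rewrite addSn ccS_div_factor /col_scale; ring.
Qed.

Lemma dd0S n a b q : qpoch a q (2 * n) != 0 ->
  dd n.+1 0 a b q =
  \prod_(j < n) (row_scale q j * col_scale a b q j) * dd n 0 (q ^+ 2 * a) (q * b) q.
Proof.
move=> nz2n.
pose A := (\matrix_(i < n.+1, j < n.+1) cc (i + j + 0) a b q) *m col_sweep n.+1 (qratio a b q).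
have -> : dd n.+1 0 a b q = \det A by rewrite det_mulmx det_col_sweep mulr1.
rewrite det_row0_pivot => [|j]; last first.
  by rewrite col_sweep_lift !mxE /= !addn0 ccSr subrr.
have -> : row' ord0 (col' ord0 A) =
    diag_mx (\row_i row_scale q i) *m \matrix_(i, j) cc (i + j + 0) (q ^+ 2 * a) (q * b) q
    *m diag_mx (\row_j col_scale a b q j).
  apply/matrixP => i j; rewrite mul_mx_diag mul_diag_mx.
  rewrite [LHS]mxE [LHS]mxE col_sweep_lift !mxE /=.
  rewrite !addn0 addSn addnS cc_sweep_entry //.
  by apply: (qpoch_le_neq0 nz2n); rewrite -addnS -addSn mul2n -addnn leq_add.
rewrite col_sweep_ord0 mxE cc0 mul1r !det_mulmx !det_diag mulrAC big_split /=.
by under eq_bigr do rewrite mxE; under [X in _ * X * _]eq_bigr do rewrite mxE.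
Qed.

Definition dd_factor a b q k :=
  qpoch b q k * qpoch q q k * \prod_(j < k) (b - q ^+ j * a)
  / (qpoch (q ^+ k.-1 * a) q k * qpoch a q (2 * k)).

Definition dd_closed n a b q :=
  q ^+ (2 * 'C(n, 3)) * \prod_(1 <= k < n) dd_factor a b q k.

Lemma dd_closedE n a b q :
  dd_closed n.+1 a b q = q ^+ (2 * 'C(n.+1, 3)) * \prod_(k < n) dd_factor a b q k.+1.
Proof. by rewrite /dd_closed big_add1 big_mkord. Qed.

Lemma dd_closedSr n a b q :
  dd_closed n.+2 a b q =
  dd_closed n.+1 a b q * q ^+ (2 * 'C(n.+1, 2)) * dd_factor a b q n.+1.
Proof. by rewrite !dd_closedE big_ord_recr binS mulnDr exprD /=; ring. Qed.

Lemma prodr_exprS q n : \prod_(k < n) q ^+ k.+1 = q ^+ 'C(n.+1, 2).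
Proof. by rewrite prodrXr -bin2_sum big_mkord big_ord_recl. Qed.

Lemma row_col_scale0 a b q :
  qpoch a q 2 != 0 -> row_scale q 0 * col_scale a b q 0 = dd_factor a b q 1.
Proof.
move=> /qpoch_neq0P nz.
have nz0 : 1 - a != 0 by have := nz 0 isT; rewrite expr0 mul1r.
have nz1 : 1 - q * a != 0 by have := nz 1 isT; rewrite expr1.
rewrite /row_scale /col_scale /dd_factor /= muln1 !qpochSr !qpoch0 big_ord1.
by rewrite !expr0 !expr1 !mul1r; field; rewrite nz0 nz1.
Qed.

Lemma row_col_scaleS a b q k : qpoch a q (2 * k.+2) != 0 ->
  row_scale q k.+1 * col_scale a b q k.+1 * dd_factor (q ^+ 2 * a) (q * b) q k.+1 =
  q ^+ k.+1 * q ^+ k.+1 * dd_factor a b q k.+2.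
Proof.
set K := k.+1; have -> : (2 * k.+2 = (2 * K).+2)%N by rewrite /K; lia.
move=> nz; have /qpoch_neq0P nzf := nz.
have nz0 : 1 - a != 0 by have := nzf 0 isT; rewrite expr0 mul1r.
have nz1 : 1 - q * a != 0 by have := nzf 1 isT; rewrite expr1.
have nzK : 1 - q ^+ K * a != 0 by apply: nzf; rewrite /K; lia.
have nzAK : qpoch (q ^+ K.+1 * a) q K != 0.
  by apply: (qpoch_shift_neq0 nz); rewrite /K; lia.
have nzA2 : qpoch (q ^+ 2 * a) q (2 * K) != 0.
  by apply: (qpoch_shift_neq0 nz); rewrite add2n.
have prod_shift : \prod_(j < K) (q * b - q ^+ j * (q ^+ 2 * a)) =
    q ^+ K * \prod_(j < K) (b - q ^+ j.+1 * a).
  rewrite -[in q ^+ K](card_ord K) -prodrMl.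
  by apply: eq_bigr => j _; rewrite !exprS; ring.
have e1 : q ^+ k * (q ^+ 2 * a) = q ^+ K.+1 * a by rewrite mulrA -exprD addn2.
have e2 : qpoch (q ^+ K * a) q K.+1 = (1 - q ^+ K * a) * qpoch (q ^+ K.+1 * a) q K.
  by rewrite qpochSl mulrA -exprS.
have e3 : qpoch a q (2 * K.+1) = (1 - a) * (1 - q * a) * qpoch (q ^+ 2 * a) q (2 * K).
  by rewrite mulnS add2n !qpochSl (mulrA q q a) -expr2 mulrA.
have e4 : \prod_(j < K.+1) (b - q ^+ j * a) = (b - a) * \prod_(j < K) (b - q ^+ j.+1 * a).
  by rewrite big_ord_recl expr0 mul1r.
rewrite /row_scale /col_scale /dd_factor /= prod_shift e1 e2 e3 e4 (qpochSl b) (qpochSr q q K).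
rewrite exprS in nzAK *; set y := q ^+ K in nzK nzAK *.
by field; rewrite nz0 nz1 nzK nzAK nzA2.
Qed.

Lemma dd_closedS n a b q : qpoch a q (2 * n.+1) != 0 ->
  \prod_(j < n.+1) (row_scale q j * col_scale a b q j) * dd_closed n.+1 (q ^+ 2 * a) (q * b) q =
  dd_closed n.+2 a b q.
Proof.
move=> nz; rewrite !dd_closedE big_ord_recl [\prod_(k < n.+1) _]big_ord_recl.
rewrite row_col_scale0; last by apply: (qpoch_le_neq0 nz); lia.
set P := \prod_(i < n) _; set P' := \prod_(k < n) _.
have PP' : P * P' = \prod_(i < n) (q ^+ i.+1 * q ^+ i.+1 * dd_factor a b q (lift ord0 i).+1).
  rewrite -big_split; apply: eq_bigr => i _; rewrite lift0 /= row_col_scaleS //.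
  by apply: (qpoch_le_neq0 nz); have := ltn_ord i; lia.
transitivity (dd_factor a b q 1 * q ^+ (2 * 'C(n.+1, 3)) * (P * P')); first by ring.
rewrite PP' big_split big_split /= prodr_exprS.
have -> : (2 * 'C(n.+2, 3) = 2 * 'C(n.+1, 3) + 'C(n.+1, 2) + 'C(n.+1, 2))%N.
  by rewrite binS; lia.
by rewrite !exprD; ring.
Qed.

Lemma dd0_closed n a b q : qpoch a q (2 * n) != 0 -> dd n.+1 0 a b q = dd_closed n.+1 a b q.
Proof.
elim: n a b => [|n IH] a b nz.
  by rewrite /dd /dd_closed big_geq // bin_small // det_mx11 mxE cc0 mulr1.
rewrite dd0S // IH ?dd_closedS //.
by apply: (qpoch_shift_neq0 nz); lia.
Qed.

Definition qpoch_ratio n a b q := qpoch b q n / qpoch (q ^+ n.-1 * a) q n.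

Lemma dd_shift n m a b q :
  dd n m a b q = cc m a b q ^+ n * dd n 0 (q ^+ m * a) (q ^+ m * b) q.
Proof.
rewrite /dd -detZ; congr (\det _); apply/matrixP => i j.
by rewrite !mxE addn0 (addnC _ m) ccD.
Qed.

Lemma dd_factor_shift1 a b q N : qpoch a q (2 * N.+1).+1 != 0 ->
  cc 1 a b q * qpoch_ratio N.+1 a b q * dd_factor (q * a) (q * b) q N.+1 =
  dd_factor a b q N.+1 * q ^+ N.+1 * qpoch_ratio N.+2 a b q.
Proof.
set K := N.+1; move=> nz; have /qpoch_neq0P nzf := nz.
have nz0 : 1 - a != 0 by have := nzf 0 isT; rewrite expr0 mul1r.
have nz2K : 1 - q ^+ (2 * K) * a != 0 by apply: nzf.
have nzN : qpoch (q ^+ N * a) q K != 0 by apply: (qpoch_shift_neq0 nz); rewrite /K; lia.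
have nzK : qpoch (q ^+ K * a) q K != 0 by apply: (qpoch_shift_neq0 nz); rewrite /K; lia.
have nzq : qpoch (q * a) q (2 * K) != 0.
  by rewrite -[q]expr1; apply: (qpoch_shift_neq0 nz); lia.
have prod_shift : \prod_(j < K) (q * b - q ^+ j * (q * a)) =
    q ^+ K * \prod_(j < K) (b - q ^+ j * a).
  rewrite -[in q ^+ K](card_ord K) -prodrMl.
  by apply: eq_bigr => j _; ring.
have e1 : q ^+ N * (q * a) = q ^+ K * a by rewrite mulrA -exprSr.
have e2 : qpoch (q ^+ K * a) q K.+1 = qpoch (q ^+ K * a) q K * (1 - q ^+ (2 * K) * a).
  by rewrite qpochSr mulrA -exprD mul2n addnn.
have e3 : qpoch a q (2 * K) = (1 - a) * qpoch (q * a) q (2 * K) / (1 - q ^+ (2 * K) * a).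
  by rewrite -qpochSl qpochSr mulfK.
rewrite cc1 /qpoch_ratio /dd_factor (_ : K.-1 = N) // (_ : K.+1.-1 = K) //.
rewrite prod_shift e1 e2 e3 (qpochSl b q K) qpochSr.
by field; rewrite nz0 nz2K nzN nzK nzq.
Qed.

Lemma dd_closed_shift1 N a b q : qpoch a q (2 * N).+1 != 0 ->
  cc 1 a b q ^+ N.+1 * dd_closed N.+1 (q * a) (q * b) q =
  dd_closed N.+1 a b q * q ^+ 'C(N.+1, 2) * qpoch_ratio N.+1 a b q.
Proof.
elim: N => [|N IH] nz.
  rewrite /dd_closed !big_geq // !bin_small // expr1 muln0 !expr0 !mulr1 !mul1r.
  by rewrite /qpoch_ratio expr0 mul1r.
rewrite !dd_closedSr exprS.
transitivity (cc 1 a b q * (cc 1 a b q ^+ N.+1 * dd_closed N.+1 (q * a) (q * b) q) *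
              q ^+ (2 * 'C(N.+1, 2)) * dd_factor (q * a) (q * b) q N.+1); first by ring.
rewrite IH; last by apply: (qpoch_le_neq0 nz); lia.
transitivity (dd_closed N.+1 a b q * q ^+ 'C(N.+1, 2) * q ^+ (2 * 'C(N.+1, 2)) *
  (cc 1 a b q * qpoch_ratio N.+1 a b q * dd_factor (q * a) (q * b) q N.+1)); first by ring.
by rewrite dd_factor_shift1 // (binS N.+1 1) bin1 exprD; ring.
Qed.

Lemma dd_closed_shift N m a b q : qpoch a q (2 * N + m) != 0 ->
  cc m a b q ^+ N.+1 * dd_closed N.+1 (q ^+ m * a) (q ^+ m * b) q =
  dd_closed N.+1 a b q * q ^+ (m * 'C(N.+1, 2)) *
  \prod_(j < m) qpoch_ratio N.+1 (q ^+ j * a) (q ^+ j * b) q.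
Proof.
elim: m => [|m IH] nz.
  by rewrite cc0 expr1n !mul1r mul0n expr0 big_ord0 !mulr1.
have ccS : cc m.+1 a b q = cc m a b q * cc 1 (q ^+ m * a) (q ^+ m * b) q.
  by rewrite -addn1 ccD.
rewrite ccS !(exprS q m) -!(mulrA q) exprMn.
transitivity (cc m a b q ^+ N.+1 * (cc 1 (q ^+ m * a) (q ^+ m * b) q ^+ N.+1 *
              dd_closed N.+1 (q * (q ^+ m * a)) (q * (q ^+ m * b)) q)); first by ring.
rewrite dd_closed_shift1; last first.
  by apply: (qpoch_shift_neq0 nz); lia.
transitivity ((cc m a b q ^+ N.+1 * dd_closed N.+1 (q ^+ m * a) (q ^+ m * b) q) *
              q ^+ 'C(N.+1, 2) * qpoch_ratio N.+1 (q ^+ m * a) (q ^+ m * b) q); first by ring.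
rewrite IH; last by apply: (qpoch_le_neq0 nz); lia.
by rewrite big_ord_recr mulSn exprD /=; ring.
Qed.

End QHankel.

Theorem theorem2 (R : fieldType) (a b q : R) (n m : nat) :
  (1 <= n)%N ->
  (forall k : nat, (k <= (2 * n - 2) + m)%N -> qpoch a q k != 0) ->
  dd n 0 a b q =
    q ^+ (2 * 'C(n, 3)) *
    \prod_(1 <= k < n)
      (qpoch b q k * qpoch q q k * \prod_(j < k) (b - q ^+ j * a)
       / (qpoch (q ^+ k.-1 * a) q k * qpoch a q (2 * k)))
  /\
  dd n m a b q =
    dd n 0 a b q * q ^+ (m * 'C(n, 2)) *
    \prod_(j < m) (qpoch (q ^+ j * b) q n / qpoch (q ^+ (n - 1 + j) * a) q n).
Proof.
case: n => [//|N] _ nz.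
have nzN : qpoch a q (2 * N + m) != 0 by apply: nz; lia.
have dd0E : dd N.+1 0 a b q = dd_closed N.+1 a b q.
  by apply: dd0_closed; apply: (qpoch_le_neq0 nzN); lia.
split; first exact: dd0E.
rewrite dd_shift dd0_closed ?dd_closed_shift // -?dd0E; last first.
  by apply: (qpoch_shift_neq0 nzN); lia.
congr (_ * _); apply: eq_bigr => j _.
by rewrite /qpoch_ratio subn1 exprD mulrA.
Qed.
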